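(* Let $1\le d\le r$ and $0\le k\le d-1$ be integers. Then, componentwise, $g^{1,d}_k\le g^{d,d}_k\le g^{d+1,d}_k\le\cdots\le g^{r,d}_k\le g^{r+1,d}_k$.
   Context: For integers $r\ge0$, $d\ge1$ and $i\in\mathbb Z$, $C(r,d,i)$ denotes the number of integer vectors $(u_1,\dots,u_d)$ with $u_1+\cdots+u_d=i$ and $0\le u_l\le r$ for all $l$. For integers $d\ge1$, $r\ge1$, $k\ge0$: if $0\le k\le r-1$, let $\hat g^{r,d}_k=(g_0,g_1,\dots,g_{\lfloor d/2\rfloor+1})\in\mathbb Z^{\lfloor d/2\rfloor+2}$ with $g_0=C(r-1,d,-k)=\delta_{0,k}$ and $g_i=C(r-1,d,ir-k)-C(r-1,d,(i-1)r-k)$ for $1\le i\le\lfloor d/2\rfloor+1$; if $k\ge r$, $\hat g^{r,d}_k$ is the zero vector. The vector $g^{r,d}_k\in\mathbb Z^{\lfloor d/2\rfloor+1}$ is obtained from $\hat g^{r,d}_k$ by deleting its last entry. (In particular $g^{1,d}_k$ is defined for $r=1$.) *)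

From HB Require Import structures.
From mathcomp Require Import all_boot all_order all_algebra.
Set Implicit Arguments. Unset Strict Implicit. Unset Printing Implicit Defensive.
Import Order.TTheory GRing.Theory Num.Theory.
Local Open Scope ring_scope.

Definition Ccount (r d : nat) (i : int) : nat :=
  #|[set u : {ffun 'I_d -> 'I_r.+1} | (\sum_(l < d) ((u l : nat)%:Z)) == i]|.

(* Entry i (0 <= i <= floor(d/2)) of the vector g^{r,d}_k (for r >= 1). *)
Definition gvec (r d k : nat) (i : 'I_(d./2).+1) : int :=
  if (k < r)%N then
    if (i : nat) == 0%N then (Ccount r.-1 d (- (k%:Z)))%:Z
    else (Ccount r.-1 d ((i : nat)%:Z * r%:Z - k%:Z))%:Z
         - (Ccount r.-1 d (((i : nat).-1)%:Z * r%:Z - k%:Z))%:Z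
  else 0.

Definition gle {d : nat} (a b : 'I_(d./2).+1 -> int) : Prop :=
  forall i, a i <= b i.
Arguments gvec r d k i : clear implicits.

From mathcomp Require Import all_boot all_order all_algebra zify.
Import Order.TTheory GRing.Theory Num.Theory.
Local Open Scope ring_scope.

(* Write N^D_q(x) = C(q,D,x) for the number of compositions of x into D parts
   in [0,q], and Δ^D_q(x) = N^D_q(x) - N^D_q(x-1) for its first difference.
   For i >= 1 and k < s the entry g^{s,d}_k(i) equals Δ^{d+1}_{s-1}(is - k),
   because N^{D+1}_q(x) = N^D_q(x-q) + ... + N^D_q(x), so that Δ^{D+1}_q(x) is
   the window sum Δ^D_q(x-q) + ... + Δ^D_q(x).  Since N^D_q is symmetric about
   Dq/2, any such window sum can be folded into the lower half of the profile.
   By induction on D this yields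
   - unimodality: Δ^D_q(x) >= 0 whenever 2x <= Dq + 1, and
   - the shift inequality Δ^D_q(x) <= Δ^D_{q+1}(x + m) for 2x <= Dq + 1 and
     2m <= D, by comparing the two folded windows term by term.
   The first gives g^{s,d}_k >= 0 for s >= d, the second g^{s,d}_k <= g^{s+1,d}_k
   for s >= d; together with g^{1,d}_k(i) <= 0 for i >= 1 and the common value
   [k = 0] of all entries of index 0, they give the chain of the theorem. *)

Definition ncomp (q D : nat) (x : int) : int := (Ccount q D x)%:Z.

Definition box_poly (q : nat) : {poly int} := \poly_(i < q.+1) 1.

Definition wsum (f : int -> int) (A : int) (n : nat) : int :=
  \sum_(t < n) f (A + t%:Z).

Definition diffc (q D : nat) (x : int) : int := ncomp q D x - ncomp q D (x - 1).

Lemma sum_Posz (D : nat) (F : 'I_D -> nat) :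
  \sum_(l < D) (F l)%:Z = (\sum_(l < D) F l)%N%:Z.
Proof. by rewrite (big_morph Posz PoszD (erefl (Posz 0))). Qed.

Lemma ncomp_coef q D (n : nat) : ncomp q D n = (box_poly q ^+ D)`_n.
Proof.
have -> : box_poly q ^+ D = \prod_(l < D) \sum_(t < q.+1) 'X^t.
  rewrite prodr_const card_ord /box_poly poly_def.
  by congr (_ ^+ _); apply: eq_bigr => t _; rewrite scale1r.
rewrite bigA_distr_bigA /= coef_sum.
under eq_bigr => f _ do rewrite prodrXr coefXn.
rewrite (eq_bigr (fun f : {ffun 'I_D -> 'I_q.+1} =>
  if n == (\sum_(i < D) f i)%N then 1 else 0 : int)); last first.
  by move=> f _; case: (_ == _).
rewrite -big_mkcond /= sumr_const natz /ncomp /Ccount -cardsE.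
congr (Posz _); apply: eq_card => f.
by rewrite !inE sum_Posz eqz_nat eq_sym.
Qed.

Lemma ncomp_neg q D x : x < 0 -> ncomp q D x = 0.
Proof.
move=> x_lt0; apply/eqP; rewrite eqz_nat cards_eq0; apply/eqP/setP => u.
rewrite !inE sum_Posz; apply/negbTE/eqP => sum_x.
by move: x_lt0; rewrite -sum_x.
Qed.

Lemma ncomp0 q x : ncomp q 0 x = (x == 0)%:Z.
Proof.
case: x => [n|n]; last by rewrite ncomp_neg.
by rewrite ncomp_coef expr0 coef1; case: n.
Qed.

(* Splitting off the last part: N^{D+1}_q(x) = N^D_q(x-q) + ... + N^D_q(x). *)
Lemma ncompS q D x : ncomp q D.+1 x = wsum (ncomp q D) (x - q%:Z) q.+1.
Proof.
rewrite /wsum (reindex_inj rev_ord_inj) /=.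
have -> : \sum_(j < q.+1) ncomp q D (x - q%:Z + (q - j)%N%:Z)
          = \sum_(a < q.+1) ncomp q D (x - a%:Z).
  by apply: eq_bigr => a _; congr ncomp; have := ltn_ord a; lia.
case: x => [n|n]; last first.
  by rewrite ncomp_neg // big1 // => a _; apply: ncomp_neg; lia.
rewrite ncomp_coef exprSr coefMr.
have n_le : (n.+1 <= n + q.+1)%N by lia.
have q_le : (q.+1 <= n + q.+1)%N by lia.
rewrite (big_ord_widen (n + q.+1) (fun j => (box_poly q ^+ D)`_(n - j) * (box_poly q)`_j)) //.
rewrite (big_ord_widen (n + q.+1) (fun j : nat => ncomp q D (n%:Z - j%:Z))) //.
rewrite big_mkcond [RHS]big_mkcond /=; apply: eq_bigr => j _.
rewrite /box_poly coef_poly.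
case: (ltnP j n.+1) => jn; case: (ltnP j q.+1) => jq //=; rewrite ?mulr1 ?mulr0 //.
  by rewrite subzn // ncomp_coef.
by rewrite ncomp_neg //; lia.
Qed.

Lemma ncomp_at0 q D : ncomp q D 0 = 1.
Proof.
elim: D => [|D IH]; first by rewrite ncomp0.
rewrite ncompS /wsum big_ord_recr /= big1 ?add0r; first by rewrite -[RHS]IH; congr ncomp; lia.
by move=> t _; apply: ncomp_neg; have := ltn_ord t; lia.
Qed.

Lemma ncomp_q0 D x : ncomp 0 D x = (x == 0)%:Z.
Proof.
elim: D x => [|D IH] x; first by rewrite ncomp0.
by rewrite ncompS /wsum big_ord1 IH subr0 addr0.
Qed.

(* Complementing every part (u_l -> q - u_l) gives N^D_q(x) = N^D_q(Dq - x). *)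
Lemma ncomp_sym q D x : ncomp q D x = ncomp q D ((D * q)%N%:Z - x).
Proof.
elim: D x => [|D IH] x; first by rewrite !ncomp0 mul0n sub0r oppr_eq0.
rewrite !ncompS /wsum (reindex_inj rev_ord_inj) /=; apply: eq_bigr => t _.
by rewrite IH; congr ncomp; rewrite mulSn; have := ltn_ord t; lia.
Qed.

Lemma diffcS q D x : diffc q D.+1 x = wsum (diffc q D) (x - q%:Z) q.+1.
Proof.
rewrite /diffc !ncompS /wsum -sumrB; apply: eq_bigr => t _.
by congr (_ - ncomp _ _ _); lia.
Qed.

Lemma wsum_diffc q D A n :
  wsum (diffc q D) A n = ncomp q D (A + n%:Z - 1) - ncomp q D (A - 1).
Proof.
elim: n => [|n IH]; first by rewrite /wsum big_ord0 addr0 subrr.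
rewrite /wsum big_ord_recr /= -/(wsum _ _ _) IH /diffc.
have -> : A + n.+1%:Z - 1 = A + n%:Z by lia.
by rewrite addrC addrA subrK addrC.
Qed.

Lemma wsum_cat f A n1 n2 :
  wsum f A (n1 + n2) = wsum f A n1 + wsum f (A + n1%:Z) n2.
Proof.
rewrite /wsum big_split_ord /=; congr (_ + _); apply: eq_bigr => t _ /=.
by congr f; lia.
Qed.

(* By symmetry of N^D_q, a window [A, e] of first differences with A - 1 below
   the mirror image Dq - e of its end e can be cut to the window [A, e'],
   where e' = min(e, Dq - e) lies in the lower half of the profile. *)
Lemma wsum_diffc_fold q D A n :
  A - 1 <= (D * q)%N%:Z - (A + n%:Z - 1) ->
  exists n' : nat,
  [/\ wsum (diffc q D) A n = wsum (diffc q D) A n',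
      A + n'%:Z - 1 <= A + n%:Z - 1,
      A + n'%:Z - 1 <= (D * q)%N%:Z - (A + n%:Z - 1) &
      A + n'%:Z - 1 = A + n%:Z - 1 \/
      A + n'%:Z - 1 = (D * q)%N%:Z - (A + n%:Z - 1)].
Proof.
move=> A_le; set e := A + n%:Z - 1.
have [low_e | high_e] := lerP (2 * e) (D * q)%N%:Z.
  by exists n; split => //; [rewrite /e; lia | left].
exists (absz ((D * q)%N%:Z - e - A + 1)).
have end_eq : A + (absz ((D * q)%N%:Z - e - A + 1))%:Z - 1 = (D * q)%N%:Z - e.
  by lia.
rewrite !wsum_diffc end_eq -ncomp_sym; split => //; [lia | by right].
Qed.

Lemma diffc_ge0 q D x : 2 * x <= (D * q)%N%:Z + 1 -> 0 <= diffc q D x.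
Proof.
elim: D x => [|D IH] x x_low.
  rewrite /diffc !ncomp0; have -> : (x - 1 == 0) = false by apply/eqP; lia.
  by case: (x == 0).
rewrite mulSn in x_low; rewrite diffcS.
have [n [-> n_le n_low _]] := wsum_diffc_fold q D (x - q%:Z) q.+1 ltac:(lia).
by apply: sumr_ge0 => t _; apply: IH; have := ltn_ord t; lia.
Qed.

Lemma wsum_le a b A A' (p n e : nat) :
  (forall t, (t < n)%N -> a (A + t%:Z) <= b (A' + p%:Z + t%:Z)) ->
  (forall t, (t < p + n + e)%N -> 0 <= b (A' + t%:Z)) ->
  wsum a A n <= wsum b A' (p + n + e).
Proof.
move=> a_le_b b_ge0; rewrite !wsum_cat.
have head_ge0 : 0 <= wsum b A' p.
  by apply: sumr_ge0 => t _; apply: b_ge0; have := ltn_ord t; lia.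
have tail_ge0 : 0 <= wsum b (A' + (p + n)%N%:Z) e.
  apply: sumr_ge0 => t _.
  have -> : A' + (p + n)%N%:Z + t%:Z = A' + (p + n + t)%N%:Z by lia.
  by apply: b_ge0; have := ltn_ord t; lia.
have mid_le : wsum a A n <= wsum b (A' + p%:Z) n by apply: ler_sum => t _; apply: a_le_b.
lia.
Qed.

Lemma diffc_shift q D x m :
  2 * x <= (D * q)%N%:Z + 1 -> (2 * m <= D)%N ->
  diffc q D x <= diffc q.+1 D (x + m%:Z).
Proof.
elim: D q x m => [|D IH] q x m x_low m_le.
  have -> : m = 0%N by lia.
  by rewrite addr0 /diffc !ncomp0.
have eDq : (D * q.+1 = D * q + D)%N by rewrite mulnS addnC.
rewrite mulSn in x_low; rewrite !diffcS.
have [n [-> n_le n_low n_eq]] := wsum_diffc_fold q D (x - q%:Z) q.+1 ltac:(lia).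
have [n' [-> n'_le n'_low n'_eq]] :=
  wsum_diffc_fold q.+1 D (x + m%:Z - q.+1%:Z) q.+2 ltac:(lia).
rewrite eDq in n'_le n'_low n'_eq.
(* the term Δ^D_q(y) of the left window is matched by Δ^D_{q+1}(y + m - 1)
   when m > 0, and by Δ^D_{q+1}(y) one place further along when m = 0 *)
have [p p_cases] : exists p : nat, (m = 0 /\ p = 1 \/ 0 < m /\ p = 0)%N.
  by case: (posnP m) => [m0 | m_gt0]; [exists 1%N; left | exists 0%N; right].
have -> : n' = (p + n + (n' - p - n))%N by lia.
apply: wsum_le => t t_lt.
  have -> : x + m%:Z - q.+1%:Z + p%:Z + t%:Z = (x - q%:Z + t%:Z) + (m.-1)%:Z.
    by lia.
  by apply: IH; lia.
by apply: diffc_ge0; rewrite eDq; lia.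
Qed.

Lemma ord_half_double {d : nat} (i : 'I_(d./2).+1) : (2 * i <= d)%N.
Proof. by rewrite mul2n -geq_half_double -ltnS. Qed.

Lemma gvec_first s d k (i : 'I_(d./2).+1) :
  (0 < s)%N -> (i : nat) = 0%N -> gvec s d k i = (k == 0%N)%:Z.
Proof.
move=> s_gt0 i0; rewrite /gvec i0 eqxx /=.
case: k => [|k] /=; first by rewrite s_gt0 oppr0 -[Posz _]/(ncomp _ _ _) ncomp_at0.
by case: ltnP => // _; rewrite -[Posz _]/(ncomp _ _ _) ncomp_neg.
Qed.

Lemma gvec_diffc q d k (i : 'I_(d./2).+1) : (k < q.+1)%N -> (0 < i)%N ->
  gvec q.+1 d k i = diffc q d.+1 ((i : nat)%:Z * q.+1%:Z - k%:Z).
Proof.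
move=> k_lt i_gt0; rewrite /gvec k_lt (negbTE (lt0n_neq0 i_gt0)) diffcS wsum_diffc /=.
by congr (ncomp _ _ _ - ncomp _ _ _); nia.
Qed.

(* Unimodality makes g^{s,d}_k nonnegative as soon as s >= d. *)
Lemma gvec_ge0 s d k (i : 'I_(d./2).+1) : (d <= s)%N -> 0 <= gvec s d k i.
Proof.
move=> d_le_s; have i2_le := ord_half_double i.
case: (ltnP k s) => [k_lt | k_ge]; last by rewrite /gvec ltnNge k_ge.
case: s k_lt d_le_s => [|q] // k_lt d_le_s.
have [i0 | i_gt0] := posnP i; first by rewrite gvec_first.
by rewrite gvec_diffc //; apply: diffc_ge0; nia.
Qed.

Lemma gvec1_le0 d k (i : 'I_(d./2).+1) : (0 < i)%N -> gvec 1 d k i <= 0.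
Proof.
move=> i_gt0; case: k => [|k]; last by rewrite /gvec.
rewrite gvec_diffc // /diffc !ncomp_q0.
case: eqP => [i_eq0 | _]; first lia.
by case: (_ == _).
Qed.

(* The shift inequality makes g^{s,d}_k increase with s as soon as s >= d. *)
Lemma gvec_mono s d k (i : 'I_(d./2).+1) :
  (0 < d <= s)%N -> gvec s d k i <= gvec s.+1 d k i.
Proof.
move=> /andP [d_gt0 d_le_s]; have i2_le := ord_half_double i.
case: (ltnP k s) => [k_lt | k_ge]; last first.
  by rewrite {1}/gvec ltnNge k_ge; apply: gvec_ge0; lia.
case: s k_lt d_le_s => [|q] // k_lt d_le_s.
have [i0 | i_gt0] := posnP i; first by rewrite !gvec_first.
rewrite !gvec_diffc //; last by lia.
have -> : (i : nat)%:Z * q.+2%:Z - k%:Z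
          = ((i : nat)%:Z * q.+1%:Z - k%:Z) + (i : nat)%:Z by lia.
by apply: diffc_shift; nia.
Qed.

Theorem mainTheorem9 (d r k : nat) :
  (1 <= d)%N -> (d <= r)%N -> (k <= d - 1)%N ->
  @gle d (gvec 1 d k) (gvec d d k) /\
  (forall s : nat, (d <= s <= r)%N -> @gle d (gvec s d k) (gvec s.+1 d k)).
Proof.
move=> d_gt0 _ _; split => [i | s /andP [d_le_s _] i].
  have [i0 | i_gt0] := posnP i; first by rewrite !gvec_first.
  exact: le_trans (gvec1_le0 d k i i_gt0) (gvec_ge0 d d k i (leqnn d)).
by apply: gvec_mono; rewrite d_gt0.
Qed.
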